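(* Let $\mathbf A$ be a finite relational structure whose relations include three binary relations $\alpha^{\mathbf A},\beta^{\mathbf A},\gamma^{\mathbf A}$, and suppose: (a) there is a finite set $\mathcal P$ of pentagons such that for each $\mathbf P\in\mathcal P$ the domain $P$ is a subset of $A$ and $\alpha^{\mathbf P}=\alpha^{\mathbf A}\cap P^2$, $\beta^{\mathbf P}=\beta^{\mathbf A}\cap P^2$, $\gamma^{\mathbf P}=\gamma^{\mathbf A}\cap P^2$; (b) for every $k\ge1$ there is a relation $D_k\subseteq A^k$, primitive-positive definable over $\mathbf A$, such that $(a_1,\dots,a_k)\in D_k$ iff some $\mathbf P\in\mathcal P$ has all of $a_1,\dots,a_k$ in its domain. Let $\mathbf P\in\mathcal P$ be such that $\mathbb L(\mathbf P)$ is non-trivial and the domain of $\mathbf P$ is not contained in the domain of any other pentagon in $\mathcal P$. Then there is a linear reduction from $\mathsf{Pent\text{-}Eval}(\mathbf P)$ to $\exists\mathrm{CSP}(\mathbf A)$.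
   Context: For a set $X$, $\mathrm{Eq}(X)$ is the lattice of equivalence relations on $X$, with bottom $0_X$ (equality) and top $1_X=X^2$. A pentagon is a finite structure $\mathbf P$ with domain $P$ and three equivalence relations $\alpha^{\mathbf P},\beta^{\mathbf P},\gamma^{\mathbf P}$ on $P$ with $\alpha^{\mathbf P}\le\beta^{\mathbf P}$, $\beta^{\mathbf P}\wedge\gamma^{\mathbf P}=0_P$, $\beta^{\mathbf P}\circ\gamma^{\mathbf P}=1_P$, $\alpha^{\mathbf P}\vee\gamma^{\mathbf P}=1_P$ in $\mathrm{Eq}(P)$. Then $P=B_{\mathbf P}\times C_{\mathbf P}$ with $\beta^{\mathbf P},\gamma^{\mathbf P}$ the kernels of the projections onto $B_{\mathbf P}$, $C_{\mathbf P}$. For $b\in B_{\mathbf P}$, $\alpha^{\mathbf P}_b=\{(c,c')\in C_{\mathbf P}^2\mid ((b,c),(b,c'))\in\alpha^{\mathbf P}\}$; $\mathbb L(\mathbf P)$ is the sublattice of $\mathrm{Eq}(C_{\mathbf P})$ generated by all $\alpha^{\mathbf P}_b$; non-trivial means more than one element. $\mathbf P_2$ is the 2-sorted structure with sorts $B_{\mathbf P}$, $C_{\mathbf P}$ and ternary relation $R=\{(b,c,c')\mid (c,c')\in\alpha^{\mathbf P}_b\}$ (first argument of first sort, others of second sort). $\mathsf{Pent\text{-}Eval}(\mathbf P)$: instances are a primitive-positive formula $\phi(X,Y)$ over $\{R\}$ with free variables $X$ of first sort and $Y$ of second sort, and weights on $X\cup Y$ summing to 1; assignments map $X\to B_{\mathbf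 P}$, $Y\to C_{\mathbf P}$, satisfying iff $\phi$ holds in $\mathbf P_2$. $\exists\mathrm{CSP}(\mathbf A)$: instances $(V,V^\exists,\mathcal C,w)$ with constraints using relations of $\mathbf A$ on free variables $V$ and existential variables $V^\exists$, weights on $V$ summing to 1; $f:V\to A$ satisfying iff it extends to a satisfying assignment. $\mathrm{dist}_{\mathcal I}(f)$ is the minimum weight of free variables on which $f$ differs from a satisfying assignment. A linear reduction from $\mathcal P$ to $\mathcal P'$: given $(\mathcal I,f)$ with $\mathcal I$ on variable set $V$, it (possibly randomly) produces $(\mathcal I',f')$ with $|V'|=O(|V|)$ such that (i) $f$ satisfying implies $f'$ satisfying; (ii) for a constant $c_1>0$ and every $\epsilon\in(0,1)$, $\mathrm{dist}_{\mathcal I}(f)\ge\epsilon$ implies $\Pr[\mathrm{dist}_{\mathcal I'}(f')\ge c_1\epsilon]\ge 9/10$; (iii) each value of $f'$ is computable with $O(1)$ queries to $f$. *)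

From HB Require Import structures.
From mathcomp Require Import all_boot all_order all_algebra.
Set Implicit Arguments. Unset Strict Implicit. Unset Printing Implicit Defensive.
Import Order.TTheory GRing.Theory Num.Theory.

(* (encoded as sequences; only sequences of length [arity s] matter).  *)
Record relstr := RelStr {
  dom : finType;
  sym : finType;
  arity : sym -> nat;
  interp : sym -> seq dom -> bool }.

Definition brel (A : relstr) (s : sym A) : rel (dom A) :=
  fun x y => interp s [:: x; y].

(* Primitive-positive formulas over A: conjunctions of atoms; variables are
   natural numbers, 0..k-1 are the free variables, all others are
   existentially quantified. *)
Inductive ppatom (S : Type) := PPrel (s : S) (vs : seq nat) | PPeq (i j : nat).

Definition ppatom_wf (A : relstr) (a : ppatom (sym A)) : bool :=
  match a with PPrel s vs => size vs == arity s | PPeq _ _ => true end.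

Definition ppatom_holds (A : relstr) (e : nat -> dom A) (a : ppatom (sym A)) : bool :=
  match a with PPrel s vs => interp s (map e vs) | PPeq i j => e i == e j end.

Definition ppdefinable (A : relstr) (k : nat) (D : k.-tuple (dom A) -> bool) : Prop :=
  exists phi : seq (ppatom (sym A)),
    all (@ppatom_wf A) phi /\
    forall t : k.-tuple (dom A),
      D t <-> exists e : nat -> dom A,
                (forall i : 'I_k, e i = tnth t i) /\ all (ppatom_holds e) phi.

Section Pentagons.
Variable T : finType.

Definition equiv_on (P : {set T}) (e : rel T) : Prop :=
  [/\ (forall x, x \in P -> e x x),
      (forall x y, x \in P -> y \in P -> e x y -> e y x) &
      (forall x y z, x \in P -> y \in P -> z \in P -> e x y -> e y z -> e x z)].

Definition join_on (P : {set T}) (e1 e2 : rel T) : rel T :=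
  connect [rel x y | [&& x \in P, y \in P & e1 x y || e2 x y]].

Definition is_pentagon (a b g : rel T) (P : {set T}) : Prop :=
  [/\ equiv_on P a, equiv_on P b & equiv_on P g] /\
  [/\
      (forall x y, x \in P -> y \in P -> a x y -> b x y),
      (forall x y, x \in P -> y \in P -> b x y -> g x y -> x = y),
      (forall x y, x \in P -> y \in P -> exists2 z, z \in P & b x z && g z y) &
      (forall x y, x \in P -> y \in P -> join_on P a g x y)].

Definition classes (e : rel T) (P : {set T}) : {set {set T}} :=
  [set [set y in P | e x y] | x in P].

Definition pclass (e : rel T) (P : {set T}) := {X : {set T} | X \in classes e P}.

(* B_P := P/beta, C_P := P/gamma; the point (b,c) is the unique element of
   b /\ c.  pR a b c c'  <->  ((b,c),(b,c')) \in alpha, i.e. (c,c') \in alpha_b *)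
Definition pR (a bt g : rel T) (P : {set T})
    (b : pclass bt P) (c c' : pclass g P) : bool :=
  [exists x, [exists x', [&& x \in val b, x \in val c, x' \in val b,
                             x' \in val c' & a x x']]].

End Pentagons.

Definition eq_join (C : finType) (E1 E2 : {set C * C}) : {set C * C} :=
  [set p | connect [rel x y | ((x, y) \in E1) || ((x, y) \in E2)] p.1 p.2].

Inductive gen_lat (C : finType) (I : Type) (G : I -> {set C * C})
  : {set C * C} -> Prop :=
| gl_base i : gen_lat G (G i)
| gl_meet E1 E2 : gen_lat G E1 -> gen_lat G E2 -> gen_lat G (E1 :&: E2)
| gl_join E1 E2 : gen_lat G E1 -> gen_lat G E2 -> gen_lat G (eq_join E1 E2).

Definition L_nontrivial (T : finType) (a bt g : rel T) (P : {set T}) : Prop :=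
  let G := fun b : pclass bt P =>
             [set p : pclass g P * pclass g P | pR a b p.1 p.2] in
  exists E1 E2, [/\ gen_lat G E1, gen_lat G E2 & E1 <> E2].

Local Open Scope ring_scope.

Inductive patom (VB VC : Type) :=
| PR (x : VB) (y y' : VC)
| PEqB (x x' : VB)
| PEqC (y y' : VC).

(* free first-sort vars 'I_nX, free second-sort vars 'I_nY,
   existential ones 'I_mX, 'I_mY *)
Record pinst (R : Type) := PInst {
  nX : nat; nY : nat; mX : nat; mY : nat;
  patoms : seq (patom ('I_nX + 'I_mX) ('I_nY + 'I_mY));
  wX : 'I_nX -> R;
  wY : 'I_nY -> R }.
Arguments wX {R} _ _.
Arguments wY {R} _ _.

Definition sumval (V W D : Type) (f : V -> D) (g : W -> D) (v : V + W) : D :=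
  match v with inl i => f i | inr j => g j end.

Section PentEval.
Variables (R : realFieldType) (B C : finType) (Rl : B -> C -> C -> bool).

Definition patom_holds (VB VC : Type) (eB : VB -> B) (eC : VC -> C)
    (a : patom VB VC) : bool :=
  match a with
  | PR x y y' => Rl (eB x) (eC y) (eC y')
  | PEqB x x' => eB x == eB x'
  | PEqC y y' => eC y == eC y'
  end.

Definition pent_wf (I : pinst R) : Prop :=
  [/\ (forall i, 0 <= wX I i), (forall j, 0 <= wY I j) &
      \sum_i wX I i + \sum_j wY I j = 1].

Definition pent_sat (I : pinst R) (fX : 'I_(nX I) -> B) (fY : 'I_(nY I) -> C) : bool :=
  [exists gX : {ffun 'I_(mX I) -> B}, exists gY : {ffun 'I_(mY I) -> C},
     all (patom_holds (sumval fX gX) (sumval fY gY)) (patoms I)].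
Arguments pent_sat I fX fY : clear implicits.

Definition pent_diff (I : pinst R) (fX hX : 'I_(nX I) -> B) (fY hY : 'I_(nY I) -> C) : R :=
  \sum_(i | fX i != hX i) wX I i + \sum_(j | fY j != hY j) wY I j.
Arguments pent_diff I fX hX fY hY : clear implicits.

(* dist_I(f) >= eps, i.e. every satisfying assignment differs from f on
   weight at least eps (dist = +oo if none is satisfying) *)
Definition pent_dist_ge (I : pinst R) (fX : 'I_(nX I) -> B) (fY : 'I_(nY I) -> C)
    (eps : R) : bool :=
  [forall hX : {ffun 'I_(nX I) -> B}, forall hY : {ffun 'I_(nY I) -> C},
     pent_sat I hX hY ==> (eps <= pent_diff I fX hX fY hY)].
End PentEval.
Arguments pent_sat {R B C} Rl I fX fY.
Arguments pent_diff {R B C} I fX hX fY hY.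
Arguments pent_dist_ge {R B C} Rl I fX fY eps.

Record einst (R : Type) (A : relstr) := EInst {
  en : nat; em : nat;
  econs : seq (sym A * seq ('I_en + 'I_em));
  ew : 'I_en -> R }.
Arguments ew {R A} _ _.

Section ECSP.
Variables (R : realFieldType) (A : relstr).

Definition ecsp_wf (I : einst R A) : Prop :=
  [/\ all (fun c => size c.2 == arity c.1) (econs I),
      (forall i, 0 <= ew I i) & \sum_i ew I i = 1].

Definition ecsp_sat (I : einst R A) (f : 'I_(en I) -> dom A) : bool :=
  [exists g : {ffun 'I_(em I) -> dom A},
     all (fun c => interp c.1 (map (sumval f g) c.2)) (econs I)].
Arguments ecsp_sat I f : clear implicits.

Definition ecsp_diff (I : einst R A) (f h : 'I_(en I) -> dom A) : R :=
  \sum_(i | f i != h i) ew I i.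
Arguments ecsp_diff I f h : clear implicits.

Definition ecsp_dist_ge (I : einst R A) (f : 'I_(en I) -> dom A) (eps : R) : bool :=
  [forall h : {ffun 'I_(en I) -> dom A}, ecsp_sat I h ==> (eps <= ecsp_diff I f h)].
End ECSP.
Arguments ecsp_sat {R A} I f.
Arguments ecsp_diff {R A} I f h.
Arguments ecsp_dist_ge {R A} I f eps.

(* A (randomized) reduction maps each source instance I to a finite    *)
(* probability distribution over outcomes; an outcome is a target      *)
(* instance I' together with, for each free variable v' of I', a list  *)
(* of source variables queried and a function computing f'(v') from    *)
(* the queried values of f.                                            *)
Record routcome (R : Type) (A : relstr) (B C : Type) (I : pinst R) := ROut {
  rout : einst R A;
  rqry : 'I_(en rout) -> seq ('I_(nX I) + 'I_(nY I));
  rans : 'I_(en rout) -> seq (B + C) -> dom A }.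
Arguments rqry {R A B C I} _ _.
Arguments rans {R A B C I} _ _ _.

Definition fprime (R : Type) (A : relstr) (B C : Type) (I : pinst R)
    (o : routcome A B C I) (fX : 'I_(nX I) -> B) (fY : 'I_(nY I) -> C)
    : 'I_(en (rout o)) -> dom A :=
  fun v => rans o v (map (sumval (fun i => inl (fX i)) (fun j => inr (fY j))) (rqry o v)).
Arguments fprime {R A B C I} o fX fY _.

Definition seq_forall (X : Type) (P : X -> Prop) (s : seq X) : Prop :=
  foldr (fun x acc => P x /\ acc) True s.

Definition linear_reduction (R : realFieldType) (B C : finType)
    (Rl : B -> C -> C -> bool) (A : relstr) : Prop :=
  exists (K q : nat) (c1 : R), 0 < c1 /\
  exists red : forall I : pinst R, seq (R * routcome A B C I),
  forall I : pinst R, pent_wf I ->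
  [/\
      seq_forall (fun p => 0 <= p.1) (red I),
      \sum_(p <- red I) p.1 = 1,
      seq_forall (fun p => [/\ ecsp_wf (rout p.2),
                               (en (rout p.2) <= K * (nX I + nY I))%N &
                               forall v, (size (rqry p.2 v) <= q)%N]) (red I),
      (forall fX fY, pent_sat Rl I fX fY ->
         seq_forall (fun p => ecsp_sat (rout p.2) (fprime p.2 fX fY)) (red I)) &
      (forall (eps : R) fX fY, 0 < eps < 1 -> pent_dist_ge Rl I fX fY eps ->
         9 / 10 <= \sum_(p <- red I | ecsp_dist_ge (rout p.2) (fprime p.2 fX fY) (c1 * eps)) p.1)].

(* The reduction is deterministic.  A value of B_P = P/beta or of C_P = P/gamma is represented
   by a point of P in that class, and an atom R(x, y, y') by two fresh points z, z' subject to
   beta(x, z), gamma(y, z), beta(x, z'), gamma(y', z') and alpha(z, z'): as P = B_P x C_P, these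
   are the points (b, c) and (b, c') of the definition of alpha_b.  To keep the variables inside
   P, every point p of P gets a free "anchor" variable of weight 1/(2|P|) whose intended value is
   p, and all variables together are constrained by a pp-definition of D_k.  A target assignment
   closer than 1/(2|P|) to f' fixes every anchor, so D_k puts all its values into a pentagon
   Q containing P, and Q = P by maximality; taking classes then yields a source assignment at
   most twice as far from f.  The equalities of the pp-definition are removed by merging
   variables; two free variables are never merged because P has two distinct points, which is
   where the non-triviality of L(P) is used. *)

From Stdlib Require Import ClassicalEpsilon.
From HB Require Import structures.
From mathcomp Require Import all_boot all_order all_algebra.
From mathcomp Require Import zify ring lra.
Import Order.TTheory GRing.Theory Num.Theory.
Set Implicit Arguments. Unset Strict Implicit. Unset Printing Implicit Defensive.

Definition constraint_holds (A : relstr) (U : Type) (H : U -> dom A)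
    (c : sym A * seq U) : bool :=
  interp c.1 (map H c.2).

Lemma all_constraint_holds_map (A : relstr) (U U' : Type) (f : U -> U') (H : U' -> dom A) cs :
  all (constraint_holds H) [seq (c.1, map f c.2) | c <- cs] =
  all (constraint_holds (H \o f)) cs.
Proof. by rewrite all_map; apply: eq_all => c; rewrite /constraint_holds /= -map_comp. Qed.

Lemma constraint_holds_ext (A : relstr) (U : Type) (H1 H2 : U -> dom A) :
  H1 =1 H2 -> constraint_holds H1 =1 constraint_holds H2.
Proof. by move=> E c; rewrite /constraint_holds (eq_map E). Qed.

Lemma ler_sum_subpred (R : numDomainType) (J : finType) (p q : pred J) (F : J -> R) :
  (forall i, (0 <= F i)%R) -> subpred p q -> (\sum_(i | p i) F i <= \sum_(i | q i) F i)%R.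
Proof.
move=> F0 pq; rewrite [X in (X <= _)%R]big_mkcond [X in (_ <= X)%R]big_mkcond /=.
by apply: ler_sum => i _; case: ifP => [/pq ->|_] //; case: ifP.
Qed.

Section EquivClasses.
Variables (T : finType) (e : rel T) (P : {set T}) (x0 : T).
Hypotheses (e_equiv : equiv_on P e) (x0P : x0 \in P).

Lemma equiv_refl x : x \in P -> e x x.
Proof. by case: e_equiv => + _ _; apply. Qed.

Lemma equiv_sym x y : x \in P -> y \in P -> e x y -> e y x.
Proof. by case: e_equiv => _ + _; apply. Qed.

Lemma equiv_trans x y z : x \in P -> y \in P -> z \in P -> e x y -> e y z -> e x z.
Proof. by case: e_equiv => _ _; apply. Qed.

Lemma class_mem_classes x : x \in P -> [set y in P | e x y] \in classes e P.
Proof. by move=> xP; apply/imsetP; exists x. Qed.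

Definition class_of (x : T) : pclass e P :=
  insubd (exist (fun X => X \in classes e P) _ (class_mem_classes x0P)) [set y in P | e x y].

Definition class_repr (b : pclass e P) : T := odflt x0 [pick x in val b].

Lemma pclassE (b : pclass e P) : exists2 x, x \in P & val b = [set y in P | e x y].
Proof. by case: b => /= X /imsetP[x xP ->]; exists x. Qed.

Lemma pclass_subset (b : pclass e P) x : x \in val b -> x \in P.
Proof. by case: (pclassE b) => y _ ->; rewrite inE => /andP[]. Qed.

Lemma pclass_rel (b : pclass e P) x y : x \in val b -> y \in val b -> e x y.
Proof.
case: (pclassE b) => z zP -> ; rewrite !inE => /andP[xP zx] /andP[yP zy].
exact: equiv_trans xP zP yP (equiv_sym zP xP zx) zy.
Qed.

Lemma val_class_of x : x \in P -> val (class_of x) = [set y in P | e x y].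
Proof. by move=> xP; rewrite /class_of insubdK // class_mem_classes. Qed.

Lemma class_repr_mem b : class_repr b \in val b.
Proof.
rewrite /class_repr; case: pickP => [//|none] /=.
by case: (pclassE b) => x xP bE; move: (none x); rewrite bE inE xP equiv_refl.
Qed.

Lemma class_repr_in b : class_repr b \in P.
Proof. exact: pclass_subset (class_repr_mem b). Qed.

Lemma class_of_mem (b : pclass e P) x : x \in val b -> class_of x = b.
Proof.
move=> xb; have xP := pclass_subset xb; apply: val_inj; rewrite val_class_of //.
case: (pclassE b) => z zP bE; move: xb; rewrite bE inE => /andP[_ zx].
apply/setP => y; rewrite !inE; case yP: (y \in P) => //=.
apply/idP/idP; first exact: equiv_trans zP xP yP zx.
exact: equiv_trans xP zP yP (equiv_sym zP xP zx).
Qed.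

Lemma class_of_repr b : class_of (class_repr b) = b.
Proof. exact: class_of_mem (class_repr_mem b). Qed.

Lemma class_of_rel x y : x \in P -> y \in P -> e x y -> class_of x = class_of y.
Proof. by move=> xP yP xy; symmetry; apply: class_of_mem; rewrite val_class_of // inE yP. Qed.

End EquivClasses.

(* Equalities [x = y] of a pp-formula are eliminated by a substitution sending
   every variable to the least variable it is forced equal to; free variables
   [0 .. k-1] then stay fixed unless the formula forces two of them equal. *)
Definition identify (i j x : nat) : nat := if x == maxn i j then minn i j else x.

Definition merge_pair (s : nat -> nat) (p : nat * nat) : nat -> nat :=
  fun x => identify (s p.1) (s p.2) (s x).

Definition decreasing_retraction (s : nat -> nat) : Prop :=
  (forall x, s (s x) = s x) /\ (forall x, s x <= x).

Lemma identify_le i j x : identify i j x <= x.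
Proof. by rewrite /identify; case: eqP => // ->; lia. Qed.

Lemma merge_pair_retraction s p :
  decreasing_retraction s -> decreasing_retraction (merge_pair s p).
Proof.
case=> sK s_le; split => x; last exact: leq_trans (identify_le _ _ _) (s_le x).
rewrite /merge_pair /identify; set a := s p.1; set b := s p.2.
have sab : s (minn a b) = minn a b by rewrite /minn; case: ifP; rewrite ?sK.
case: (eqVneq (s x) (maxn a b)) => E; first by rewrite sab; case: eqP => // ->.
by rewrite sK (negbTE E).
Qed.

Lemma merge_retraction L s :
  decreasing_retraction s -> decreasing_retraction (foldl merge_pair s L).
Proof. by elim: L s => //= p L IH s /(merge_pair_retraction p)/IH. Qed.

Lemma merge_congr L s i j : s i = s j -> foldl merge_pair s L i = foldl merge_pair s L j.
Proof. by elim: L s => //= p L IH s sij; apply: IH; rewrite /merge_pair sij. Qed.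

Lemma merge_identifies L s :
  all (fun p => foldl merge_pair s L p.1 == foldl merge_pair s L p.2) L.
Proof.
elim: L s => //= p L IH s; rewrite IH andbT; apply/eqP/merge_congr.
rewrite /merge_pair /identify; set a := s p.1; set b := s p.2.
by rewrite /maxn /minn; case: ltngtP => // _; rewrite eqxx; case: ifP.
Qed.

Lemma merge_respects (X : eqType) (e : nat -> X) L s :
  (forall x, e (s x) = e x) -> all (fun p => e p.1 == e p.2) L ->
  forall x, e (foldl merge_pair s L x) = e x.
Proof.
elim: L s => //= p L IH s es /andP[/eqP ep eL]; apply: IH => // x.
rewrite /merge_pair /identify; case: eqP => [sx|_]; last exact: es.
transitivity (e (s x)); last exact: es.
have eab : e (s p.1) = e (s p.2) by rewrite !es.
by rewrite sx /maxn /minn; case: ltngtP.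
Qed.

Definition merge (L : seq (nat * nat)) : nat -> nat := foldl merge_pair id L.

Definition ppeqs (S : Type) (phi : seq (ppatom S)) : seq (nat * nat) :=
  pmap (fun a => if a is PPeq i j then Some (i, j) else None) phi.

Definition pprels (S : Type) (phi : seq (ppatom S)) : seq (S * seq nat) :=
  pmap (fun a => if a is PPrel s vs then Some (s, vs) else None) phi.

Definition ppdefines (A : relstr) (k : nat) (D : k.-tuple (dom A) -> bool)
    (phi : seq (ppatom (sym A))) : Prop :=
  all (@ppatom_wf A) phi /\
  forall t : k.-tuple (dom A), D t <->
    exists e : nat -> dom A, (forall i : 'I_k, e i = tnth t i) /\ all (ppatom_holds e) phi.

Definition ppbound (S : eqType) (phi : seq (ppatom S)) : nat :=
  \max_(c <- pprels phi) \max_(v <- c.2) v.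

Lemma ppbound_ge (S : eqType) (phi : seq (ppatom S)) c v :
  c \in pprels phi -> v \in c.2 -> v <= ppbound phi.
Proof.
move=> cphi vc; rewrite /ppbound.
have := leq_bigmax_seq (F := fun c : S * seq nat => \max_(v <- c.2) v) c cphi isT.
apply: leq_trans; exact: (leq_bigmax_seq (F := fun v => v) v vc isT).
Qed.

Lemma all_ppatom_holds (A : relstr) (e : nat -> dom A) (phi : seq (ppatom (sym A))) :
  all (ppatom_holds e) phi =
  all (fun p => e p.1 == e p.2) (ppeqs phi) && all (constraint_holds e) (pprels phi).
Proof.
by rewrite !all_pmap -all_predI; apply: eq_all => -[s vs|i j]; rewrite /= ?andbT.
Qed.

Lemma pprels_wf (A : relstr) (phi : seq (ppatom (sym A))) :
  all (@ppatom_wf A) phi -> all (fun c => size c.2 == arity c.1) (pprels phi).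
Proof. by rewrite all_pmap; apply: sub_all => -[s vs|i j]. Qed.

Section PPGadget.
Variables (A : relstr) (W : finType) (D : #|W|.-tuple (dom A) -> bool).
Variable phi : seq (ppatom (sym A)).
Hypothesis phi_defines : ppdefines D phi.
Hypothesis D_separates : forall i j : 'I_#|W|, i != j -> exists2 t, D t & tnth t i != tnth t j.

Local Notation k := #|W|.

Definition gadget_var : finType := 'I_(ppbound phi).+1.

Definition ppsubst : nat -> nat := merge (ppeqs phi).

(* Variable [j] of [phi] is first merged, then names the [j]-th element of [W] if [j < k] and
   the gadget variable [j - k] otherwise; [inord] is exact on the variables of [pprels phi]. *)
Definition ppvar (j : nat) : W + gadget_var :=
  if (insub (ppsubst j) : option 'I_k) is Some i then inl (enum_val i)
  else inr (inord (ppsubst j - k)).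

Definition gadget : seq (sym A * seq (W + gadget_var)) :=
  [seq (c.1, map ppvar c.2) | c <- pprels phi].

Definition tuple_of_fun (h : W -> dom A) : k.-tuple (dom A) := [tuple h (enum_val i) | i < k].

Lemma gadget_wf : all (fun c => size c.2 == arity c.1) gadget.
Proof. by rewrite all_map; apply: sub_all (pprels_wf phi_defines.1) => c; rewrite /= size_map. Qed.

Lemma ppsubst_le j : ppsubst j <= j.
Proof. by have [_] := merge_retraction (ppeqs phi) (s := id) (conj (fun=> erefl) leqnn). Qed.

Lemma ppsubst_respects e : all (ppatom_holds e) phi -> forall j, e (ppsubst j) = e j.
Proof. by rewrite all_ppatom_holds => /andP[eqs _]; apply: merge_respects. Qed.

Lemma ppsubst_free (i : 'I_k) : ppsubst i = i.
Proof.
apply/eqP; rewrite eqn_leq ppsubst_le leqNgt; apply/negP => lt_si.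
have [j ji] : exists j : 'I_k, val j = ppsubst i by exists (Ordinal (ltn_trans lt_si (ltn_ord i))).
have ij : i != j by rewrite -val_eqE ji (gtn_eqF lt_si).
have [t /phi_defines.2 [e [et ephi]]] := D_separates ij.
by rewrite -!et ji ppsubst_respects // eqxx.
Qed.

Lemma ppvar_free (i : 'I_k) : ppvar i = inl (enum_val i).
Proof. by rewrite /ppvar ppsubst_free valK. Qed.

Lemma gadget_sound (H : W + gadget_var -> dom A) :
  all (constraint_holds H) gadget -> D (tuple_of_fun (H \o inl)).
Proof.
rewrite all_constraint_holds_map => rels; apply/phi_defines.2.
exists (H \o ppvar); split; first by move=> i; rewrite tnth_mktuple /= ppvar_free.
rewrite all_ppatom_holds rels andbT.
apply: sub_all (merge_identifies (ppeqs phi) id) => p /eqP sp.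
by rewrite /= /ppvar /ppsubst /merge sp.
Qed.

Lemma gadget_complete (h : W -> dom A) :
  D (tuple_of_fun h) -> exists g : gadget_var -> dom A, all (constraint_holds (sumval h g)) gadget.
Proof.
case/phi_defines.2 => e [eh ephi]; pose G (g : gadget_var) := e (k + g); exists G.
move: (ephi); rewrite all_ppatom_holds all_constraint_holds_map => /andP[_ /allP rels].
apply/allP => c cphi; rewrite /constraint_holds.
suff /eq_in_map <- : {in c.2, e =1 sumval h G \o ppvar} by apply: rels.
move=> v vc /=.
rewrite -(ppsubst_respects ephi) /ppvar; case: insubP => [i _ <-|].
  by rewrite /= eh tnth_mktuple.
rewrite -leqNgt => le_kj /=; rewrite /G inordK ?subnKC // ltnS.
exact: leq_trans (leq_subr _ _) (leq_trans (ppsubst_le v) (ppbound_ge cphi vc)).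
Qed.

End PPGadget.

Section EinstOfConstraints.
Local Open Scope ring_scope.
Variables (R : realFieldType) (A : relstr) (VF VE : finType).
Variables (cs : seq (sym A * seq (VF + VE))) (w : VF -> R).

Definition einst_index (v : VF + VE) : 'I_#|VF| + 'I_#|VE| :=
  sumval (fun x => inl (enum_rank x)) (fun y => inr (enum_rank y)) v.

Definition einst_of : einst R A :=
  @EInst R A #|VF| #|VE| [seq (c.1, map einst_index c.2) | c <- cs] (w \o enum_val).

Lemma einst_of_sat (f : 'I_#|VF| -> dom A) :
  ecsp_sat einst_of f =
  [exists g : {ffun VE -> dom A}, all (constraint_holds (sumval (f \o enum_rank) g)) cs].
Proof.
apply/existsP/existsP => [[g sat_g]|[g sat_g]].
- exists [ffun y => g (enum_rank y)]; move: sat_g; rewrite /= all_map.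
  apply: sub_all => c; rewrite /constraint_holds /= -map_comp.
  by congr (interp _ _); apply: eq_map => -[x|y] //=; rewrite ffunE.
- exists [ffun i => g (enum_val i)]; move: sat_g; rewrite /= all_map.
  apply: sub_all => c; rewrite /constraint_holds /= -map_comp.
  by congr (interp _ _); apply: eq_map => -[x|y] //=; rewrite ffunE enum_rankK.
Qed.

Lemma einst_of_diff (f h : 'I_#|VF| -> dom A) :
  ecsp_diff einst_of f h = \sum_(v | f (enum_rank v) != h (enum_rank v)) w v.
Proof.
by rewrite [RHS](big_enum_val_cond (A := predT)); apply: eq_bigl => i; rewrite /= enum_valK.
Qed.

Lemma einst_of_weights : \sum_i ew einst_of i = \sum_v w v.
Proof. by rewrite [RHS](big_enum_val (A := predT)). Qed.

End EinstOfConstraints.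

Section Reduction.
Local Open Scope ring_scope.
Variables (R : realFieldType) (A : relstr) (sa sb sg : sym A).
Hypotheses (arity_a : arity sa = 2) (arity_b : arity sb = 2) (arity_g : arity sg = 2).
Variables (Pset : {set {set dom A}}) (P : {set dom A}).
Hypothesis P_in : P \in Pset.
Hypothesis P_maximal : forall Q, Q \in Pset -> Q != P -> ~~ (P \subset Q).
Hypotheses (beta_equiv : equiv_on P (brel sb)) (gamma_equiv : equiv_on P (brel sg)).
Variables (p1 p2 : dom A).
Hypotheses (p1P : p1 \in P) (p2P : p2 \in P) (p1p2 : p1 != p2).

Definition covered (k : nat) (t : k.-tuple (dom A)) : bool :=
  [exists Q in Pset, all (fun x => x \in Q) t].

Variable phiD : nat -> seq (ppatom (sym A)).
Hypothesis phiD_defines : forall k, (0 < k)%N -> ppdefines (@covered k) (phiD k).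

Lemma covered_of_P k (t : k.-tuple (dom A)) : (forall i, tnth t i \in P) -> covered t.
Proof. by move=> tP; apply/existsP; exists P; rewrite P_in; apply/allP => x /tnthP[i ->]. Qed.

Lemma covered_separates k (i j : 'I_k) : i != j -> exists2 t, covered t & tnth t i != tnth t j.
Proof.
move=> ij; exists [tuple if l == i then p2 else p1 | l < k].
  by apply: covered_of_P => l; rewrite tnth_mktuple; case: ifP.
by rewrite !tnth_mktuple eqxx eq_sym ifN_eq // eq_sym.
Qed.

Local Notation B := (pclass (brel sb) P).
Local Notation C := (pclass (brel sg) P).
Local Notation Rl := (pR (brel sa) (bt := brel sb) (g := brel sg) (P := P)).

Definition beta_class (x : dom A) : B := class_of (brel sb) p1P x.
Definition gamma_class (x : dom A) : C := class_of (brel sg) p1P x.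
Definition beta_point (b : B) : dom A := class_repr p1 b.
Definition gamma_point (c : C) : dom A := class_repr p1 c.

Lemma beta_point_mem b : beta_point b \in val b.
Proof. exact: class_repr_mem. Qed.

Lemma gamma_point_mem c : gamma_point c \in val c.
Proof. exact: class_repr_mem. Qed.

Lemma beta_point_in b : beta_point b \in P.
Proof. exact: class_repr_in. Qed.

Lemma gamma_point_in c : gamma_point c \in P.
Proof. exact: class_repr_in. Qed.

Lemma beta_class_point b : beta_class (beta_point b) = b.
Proof. exact: class_of_repr. Qed.

Lemma gamma_class_point c : gamma_class (gamma_point c) = c.
Proof. exact: class_of_repr. Qed.

Definition anchor : finType := {x : dom A | x \in P}.

Definition anchor_weight : R := (2 * #|anchor|%:R)^-1.

Lemma card_anchor_neq0 : #|anchor|%:R != 0 :> R.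
Proof. by rewrite pnatr_eq0 -lt0n; apply/card_gt0P; exists (exist _ p1 p1P). Qed.

Lemma anchor_weight_gt0 : 0 < anchor_weight.
Proof. by rewrite invr_gt0 mulr_gt0 // ltr0n lt0n -(pnatr_eq0 R) card_anchor_neq0. Qed.

Lemma card_anchor_weight : #|anchor|%:R * anchor_weight = 2^-1.
Proof. by rewrite /anchor_weight; field; rewrite card_anchor_neq0. Qed.

Lemma anchor_weight_le_half : 2 * anchor_weight <= 1.
Proof.
have : 1 <= #|anchor|%:R :> R by rewrite ler1n lt0n -(pnatr_eq0 R) card_anchor_neq0.
by move: card_anchor_weight anchor_weight_gt0; nra.
Qed.

Section Instance.
Variable I : pinst R.

Definition xvar : finType := ('I_(nX I) + 'I_(mX I))%type.
Definition yvar : finType := ('I_(nY I) + 'I_(mY I))%type.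
Definition free_var : finType := (('I_(nX I) + 'I_(nY I)) + anchor)%type.
Definition aux_var : finType := (('I_(mX I) + 'I_(mY I)) + (xvar * yvar * yvar * bool))%type.
Definition main_var : finType := (free_var + aux_var)%type.

Definition cover_formula : seq (ppatom (sym A)) := phiD #|main_var|.

Definition xv (x : xvar) : main_var :=
  match x with inl i => inl (inl (inl i)) | inr i => inr (inl (inl i)) end.
Definition yv (y : yvar) : main_var :=
  match y with inl j => inl (inl (inr j)) | inr j => inr (inl (inr j)) end.
Definition zv (t : xvar * yvar * yvar) (b : bool) : main_var := inr (inr (t, b)).

(* [zv t false] and [zv t true] stand for the points (b, c) and (b, c') of
   P = B x C witnessing R(b, c, c'). *)
Definition atom_constraints (a : patom xvar yvar) : seq (sym A * seq main_var) :=
  match a with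
  | PR x y y' => [:: (sb, [:: xv x; zv (x, y, y') false]);
                     (sg, [:: yv y; zv (x, y, y') false]);
                     (sb, [:: xv x; zv (x, y, y') true]);
                     (sg, [:: yv y'; zv (x, y, y') true]);
                     (sa, [:: zv (x, y, y') false; zv (x, y, y') true])]
  | PEqB x x' => [:: (sb, [:: xv x; xv x'])]
  | PEqC y y' => [:: (sg, [:: yv y; yv y'])]
  end.

Definition main_constraints : seq (sym A * seq main_var) :=
  flatten (map atom_constraints (patoms I)).

Local Notation gvar := (gadget_var cover_formula).
Local Notation gadget_constraints := (gadget main_var cover_formula).

Definition embed_var (u : main_var + gvar) : free_var + (aux_var + gvar) :=
  match u with inl (inl v) => inl v | inl (inr v) => inr (inl v) | inr g => inr (inr g) end.

Definition target_constraints : seq (sym A * seq (free_var + (aux_var + gvar))) :=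
  [seq (c.1, map embed_var c.2)
  | c <- [seq (c.1, map inl c.2) | c <- main_constraints] ++ gadget_constraints].

Definition weight (v : free_var) : R :=
  match v with inl (inl i) => wX I i / 2 | inl (inr j) => wY I j / 2 | inr _ => anchor_weight end.

Definition target : einst R A := einst_of target_constraints weight.

Definition fprime_of (fX : 'I_(nX I) -> B) (fY : 'I_(nY I) -> C) (v : free_var) : dom A :=
  match v with
  | inl (inl i) => beta_point (fX i)
  | inl (inr j) => gamma_point (fY j)
  | inr x => val x
  end.

Definition query (v : free_var) : seq ('I_(nX I) + 'I_(nY I)) :=
  match v with inl (inl i) => [:: inl i] | inl (inr j) => [:: inr j] | inr _ => [::] end.

Definition answer (v : free_var) (s : seq (B + C)) : dom A :=
  match v, s with
  | inl (inl _), [:: inl b] => beta_point b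
  | inl (inr _), [:: inr c] => gamma_point c
  | inr x, _ => val x
  | _, _ => p1 (* unreachable: [s] answers [query v] *)
  end.

Definition outcome : routcome A B C I :=
  @ROut R A B C I target (fun v => query (enum_val v)) (fun v => answer (enum_val v)).

Lemma fprime_outcome fX fY v : fprime outcome fX fY (enum_rank v) = fprime_of fX fY v.
Proof. by rewrite /fprime /= enum_rankK; case: v => [[i|j]|x]. Qed.

Lemma target_constraints_holds H :
  all (constraint_holds H) target_constraints =
  all (constraint_holds (H \o embed_var \o inl)) main_constraints &&
  all (constraint_holds (H \o embed_var)) gadget_constraints.
Proof. by rewrite all_constraint_holds_map all_cat all_constraint_holds_map. Qed.

Lemma main_var_gt0 : (0 < #|main_var|)%N.
Proof. by apply/card_gt0P; exists (inl (inr (exist _ p1 p1P))). Qed.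

Lemma cover_formula_defines : ppdefines (@covered #|main_var|) cover_formula.
Proof. exact: phiD_defines main_var_gt0. Qed.

Lemma all_main_constraints (H : main_var -> dom A) :
  all (constraint_holds H) main_constraints =
  all (fun a => all (constraint_holds H) (atom_constraints a)) (patoms I).
Proof. by rewrite /main_constraints; elim: (patoms I) => //= a s IH; rewrite all_cat IH. Qed.

Lemma main_constraints_wf : all (fun c => size c.2 == arity c.1) main_constraints.
Proof.
rewrite /main_constraints; elim: (patoms I) => //= -[x y y'|x x'|y y'] s IH;
  by rewrite all_cat IH /= ?arity_a ?arity_b ?arity_g.
Qed.

Lemma weight_ge0 : pent_wf I -> forall v, 0 <= weight v.
Proof.
case=> wX0 wY0 _ [[i|j]|x] /=; last exact: ltW anchor_weight_gt0.
  by rewrite divr_ge0.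
by rewrite divr_ge0.
Qed.

Lemma weight_sum : pent_wf I -> \sum_v weight v = 1.
Proof.
case=> _ _ wsum; rewrite !big_sumType /= sumr_const -!mulr_suml.
rewrite -[anchor_weight *+ _]mulr_natr (_ : #|xpredT| = #|anchor|) //.
rewrite [anchor_weight * _]mulrC card_anchor_weight.
by move: wsum; lra.
Qed.

Lemma target_wf : pent_wf I -> ecsp_wf target.
Proof.
move=> wfI; split.
- rewrite /= !all_map all_cat all_map; apply/andP; split.
    by apply: sub_all main_constraints_wf => c; rewrite /preim /= !size_map.
  by apply: sub_all (gadget_wf cover_formula_defines) => c; rewrite /preim /= !size_map.
- by move=> i; apply: weight_ge0.
- by rewrite einst_of_weights weight_sum.
Qed.

Lemma source_vars_gt0 : pent_wf I -> (0 < nX I + nY I)%N.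
Proof.
case=> _ _ /eqP; rewrite lt0n; apply: contraTneq => n0.
by rewrite !big1 ?addr0 1?eq_sym ?oner_eq0 // => i _; have := ltn_ord i; lia.
Qed.

Lemma target_size : pent_wf I -> (en target <= #|dom A|.+1 * (nX I + nY I))%N.
Proof.
move=> /source_vars_gt0 n0; rewrite /= !card_sum !card_ord mulSn leq_add2l.
by apply: leq_trans (leq_pmulr _ n0); rewrite card_sig max_card.
Qed.

Section Completeness.
Variables (fX : 'I_(nX I) -> B) (fY : 'I_(nY I) -> C).
Variables (gX : {ffun 'I_(mX I) -> B}) (gY : {ffun 'I_(mY I) -> C}).

Definition pR_witness (x : xvar) (y y' : yvar) (p : dom A * dom A) : bool :=
  [&& p.1 \in val (sumval fX gX x), p.1 \in val (sumval fY gY y),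
      p.2 \in val (sumval fX gX x), p.2 \in val (sumval fY gY y') & brel sa p.1 p.2].

Definition main_assignment (w : main_var) : dom A :=
  match w with
  | inl v => fprime_of fX fY v
  | inr (inl (inl i)) => beta_point (gX i)
  | inr (inl (inr j)) => gamma_point (gY j)
  | inr (inr ((x, y, y'), b)) =>
      if [pick p | pR_witness x y y' p] is Some p then (if b then p.2 else p.1) else p1
  end.

Lemma main_assignment_in w : main_assignment w \in P.
Proof.
case: w => [[[i|j]|x]|[[i|j]|[[[x y] y'] b]]] /=;
  rewrite ?beta_point_in ?gamma_point_in ?(valP x) //.
case: pickP => [p /and5P[p1x _ p2x _ _]|_] //.
by case: b; [apply: pclass_subset p2x | apply: pclass_subset p1x].
Qed.

Lemma main_assignment_xv x : main_assignment (xv x) = beta_point (sumval fX gX x).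
Proof. by case: x. Qed.

Lemma main_assignment_yv y : main_assignment (yv y) = gamma_point (sumval fY gY y).
Proof. by case: y. Qed.

Lemma main_assignment_holds :
  all (patom_holds Rl (sumval fX gX) (sumval fY gY)) (patoms I) ->
  all (constraint_holds main_assignment) main_constraints.
Proof.
rewrite all_main_constraints; apply: sub_all => -[x y y'|x x'|y y'] /=;
  rewrite /constraint_holds /= ?main_assignment_xv ?main_assignment_yv.
- case: pickP => [[z z'] /and5P[zx zy z'x z'y zz'] _|none /existsP[z /existsP[z' zz']]].
    have beta_pt := pclass_rel beta_equiv (beta_point_mem _).
    have gamma_pt := pclass_rel gamma_equiv (gamma_point_mem _).
    move: (beta_pt _ _ zx) (gamma_pt _ _ zy) (beta_pt _ _ z'x) (gamma_pt _ _ z'y) zz'.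
    by rewrite /brel /= => -> -> -> -> ->.
  by move: (none (z, z')); rewrite /pR_witness /= zz'.
- by move=> /eqP <-; rewrite andbT; apply: (equiv_refl beta_equiv (beta_point_in _)).
- by move=> /eqP <-; rewrite andbT; apply: (equiv_refl gamma_equiv (gamma_point_in _)).
Qed.

End Completeness.

Lemma main_sound (H : main_var -> dom A) :
  (forall w, H w \in P) -> all (constraint_holds H) main_constraints ->
  pent_sat Rl I [ffun i => beta_class (H (xv (inl i)))] [ffun j => gamma_class (H (yv (inl j)))].
Proof.
move=> HP; rewrite all_main_constraints => holds.
apply/existsP; exists [ffun i => beta_class (H (xv (inr i)))].
apply/existsP; exists [ffun j => gamma_class (H (yv (inr j)))].
set hX := sumval _ _; set hY := sumval _ _.
have EX x : hX x = beta_class (H (xv x)) by case: x => i; rewrite /hX /= ffunE.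
have EY y : hY y = gamma_class (H (yv y)) by case: y => j; rewrite /hY /= ffunE.
apply: sub_all holds => -[x y y'|x x'|y y'] /=; rewrite /constraint_holds /= ?andbT.
- case/and5P => zx zy z'x z'y zz'; rewrite EX !EY.
  apply/existsP; exists (H (zv (x, y, y') false)); apply/existsP; exists (H (zv (x, y, y') true)).
  by rewrite !val_class_of // !inE !HP; apply/and5P; split.
- by move=> xx'; rewrite !EX; apply/eqP/(class_of_rel beta_equiv p1P (HP _) (HP _) xx').
- by move=> yy'; rewrite !EY; apply/eqP/(class_of_rel gamma_equiv p1P (HP _) (HP _) yy').
Qed.

Lemma target_complete fX fY : pent_sat Rl I fX fY -> ecsp_sat target (fprime outcome fX fY).
Proof.
case/existsP => gX /existsP[gY sat]; set h := main_assignment fX fY gX gY.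
have [g gadget_h] : exists g, all (constraint_holds (sumval h g)) gadget_constraints.
  apply: (gadget_complete cover_formula_defines); apply: covered_of_P => i.
  by rewrite tnth_mktuple main_assignment_in.
rewrite einst_of_sat; apply/existsP; exists [ffun v => sumval (h \o inr) g v].
set H := sumval _ _; have EH : H \o embed_var =1 sumval h g.
  by case=> [[v|v]|v]; [exact: (fprime_outcome fX fY v) | rewrite /H /= ffunE ..].
rewrite target_constraints_holds (eq_all (constraint_holds_ext EH)) gadget_h andbT.
by rewrite (eq_all (constraint_holds_ext (fun w => EH (inl w)))) main_assignment_holds.
Qed.

Lemma anchors_fixed fX fY (H : free_var -> dom A) : pent_wf I ->
  \sum_(v | fprime_of fX fY v != H v) weight v < anchor_weight ->
  forall x : anchor, H (inr x) = val x.
Proof.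
move=> wfI close x; apply/eqP; rewrite eq_sym; apply: contraTT close => moved.
rewrite -leNgt (bigD1 (inr x)) //= lerDl.
by apply: sumr_ge0 => v _; apply: weight_ge0.
Qed.

Lemma main_in_P (H : main_var + gvar -> dom A) :
  all (constraint_holds H) gadget_constraints ->
  (forall x : anchor, H (inl (inl (inr x))) = val x) -> forall w, H (inl w) \in P.
Proof.
move=> /(gadget_sound cover_formula_defines (@covered_separates _)).
case/existsP => Q /andP[QPset HQ] anchors.
have inQ w : H (inl w) \in Q.
  have -> : H (inl w) = tnth (tuple_of_fun (H \o inl)) (enum_rank w).
    by rewrite tnth_mktuple enum_rankK.
  by move/allP: HQ; apply; apply: mem_tnth.
have PQ : P \subset Q.
  by apply/subsetP => x xP; have /= <- := anchors (exist _ x xP); apply: inQ.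
by case: (eqVneq Q P) => [<- //|/(P_maximal QPset)]; rewrite PQ.
Qed.

Lemma pent_diff_le fX fY (H : main_var -> dom A) : pent_wf I ->
  pent_diff I fX [ffun i => beta_class (H (xv (inl i)))] fY [ffun j => gamma_class (H (yv (inl j)))]
  <= 2 * \sum_(v | fprime_of fX fY v != H (inl v)) weight v.
Proof.
move=> wfI; case: (wfI) => wX0 wY0 _.
have anchors0 : 0 <= \sum_(x | val x != H (inl (inr x))) weight (inr x).
  by apply: sumr_ge0 => x _; apply: weight_ge0.
have diffX : \sum_(i | fX i != beta_class (H (xv (inl i)))) wX I i <=
             \sum_(i | beta_point (fX i) != H (xv (inl i))) wX I i.
  by apply: ler_sum_subpred => // i; apply: contra => /eqP <-; rewrite beta_class_point.
have diffY : \sum_(j | fY j != gamma_class (H (yv (inl j)))) wY I j <=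
             \sum_(j | gamma_point (fY j) != H (yv (inl j))) wY I j.
  by apply: ler_sum_subpred => // j; apply: contra => /eqP <-; rewrite gamma_class_point.
rewrite /pent_diff !big_sumType /= -!mulr_suml.
under eq_bigl do rewrite ffunE.
under [X in _ + X <= _]eq_bigl do rewrite ffunE.
by move: anchors0 diffX diffY; lra.
Qed.

Lemma target_sound eps fX fY : pent_wf I -> 0 < eps < 1 ->
  pent_dist_ge Rl I fX fY eps -> ecsp_dist_ge target (fprime outcome fX fY) (anchor_weight * eps).
Proof.
move=> wfI /andP[eps0 eps1] far; apply/forallP => h; apply/implyP.
rewrite einst_of_sat => /existsP[G]; set H := sumval _ G.
rewrite target_constraints_holds => /andP[main gad].
rewrite einst_of_diff (eq_bigl (fun v => fprime_of fX fY v != H (inl v))) => [|v]; last first.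
  by rewrite fprime_outcome.
rewrite leNgt; apply/negP => close.
have small_weight : anchor_weight * eps < anchor_weight by rewrite gtr_pMr ?anchor_weight_gt0.
have anchors := anchors_fixed wfI (lt_trans close small_weight).
have inP := main_in_P gad anchors.
move/forallP/(_ [ffun i => beta_class (H (embed_var (inl (xv (inl i)))))]): far.
move/forallP/(_ [ffun j => gamma_class (H (embed_var (inl (yv (inl j)))))]).
move/implyP/(_ (main_sound inP main)).
have := pent_diff_le fX fY (H \o embed_var \o inl) wfI.
by move: anchor_weight_le_half anchor_weight_gt0 close; nra.
Qed.

End Instance.

Lemma pentagon_linear_reduction : linear_reduction R Rl A.
Proof.
exists #|dom A|.+1, 1%N, anchor_weight; split; first exact: anchor_weight_gt0.
exists (fun I => [:: (1, outcome I)]) => I wfI; split => /=.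
- by split => //; apply: ler01.
- by rewrite big_seq1.
- split => //; split; [exact: target_wf | exact: target_size |].
  by move=> v; case: (enum_val v) => [[i|j]|x].
- by move=> fX fY sat; split => //; apply: target_complete.
- by move=> eps fX fY eps01 far; rewrite big_cons big_nil target_sound //=; lra.
Qed.

End Reduction.

Lemma L_nontrivial_two_points (T : finType) (a b g : rel T) (P : {set T}) :
  [/\ equiv_on P a, equiv_on P b & equiv_on P g] -> L_nontrivial a b g P ->
  exists p1 p2, [/\ p1 \in P, p2 \in P & p1 != p2].
Proof.
move=> [a_equiv b_equiv g_equiv] [E1 [E2 [gen1 gen2 E12]]].
have [/existsP[x /existsP[y /and3P[xP yP xy]]]|] :=
  boolP [exists x, exists y, [&& x \in P, y \in P & x != y]]; first by exists x, y.
move=> none; have single x y : x \in P -> y \in P -> x = y.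
  move=> xP yP; apply/eqP; apply: contraNT none => xy.
  by apply/existsP; exists x; apply/existsP; exists y; rewrite xP yP.
have mem_class e (c : pclass e P) x : equiv_on P e -> x \in P -> x \in val c.
  move=> e_equiv xP; have [y yP ->] := pclassE c.
  by rewrite inE xP (single y x yP xP) (equiv_refl e_equiv xP).
pose gen (bb : pclass b P) := [set p : pclass g P * pclass g P | pR a bb p.1 p.2].
suff full E : gen_lat gen E -> E = setT.
  by case: E12; rewrite (full _ gen1) (full _ gen2).
elim => [bb|F1 F2 _ -> _ ->|F1 F2 _ -> _ ->]; last 2 first.
- by rewrite setIT.
- by apply/setP => -[c c']; rewrite !inE; apply: connect1; rewrite /= inE.
have [x xP _] := pclassE bb.
apply/setP => -[c c']; rewrite /gen !inE; apply/existsP; exists x; apply/existsP; exists x.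
by rewrite !mem_class // (equiv_refl a_equiv xP).
Qed.

Theorem mainTheorem16 (R : realFieldType) (A : relstr)
    (sa sb sg : sym A)
    (Ha : arity sa = 2) (Hb : arity sb = 2) (Hg : arity sg = 2)
    (Pset : {set {set dom A}})
    (Hpent : forall P, P \in Pset -> is_pentagon (brel sa) (brel sb) (brel sg) P)
    (Hdef : forall k : nat, 0 < k ->
       ppdefinable (k := k) (fun t => [exists Q in Pset, all (fun x => x \in Q) t]))
    (P : {set dom A}) (HP : P \in Pset)
    (HL : L_nontrivial (brel sa) (brel sb) (brel sg) P)
    (Hmax : forall Q, Q \in Pset -> Q != P -> ~~ (P \subset Q)) :
  linear_reduction R (pR (brel sa) (P := P) (bt := brel sb) (g := brel sg)) A.
Proof.
have [[_ beta_equiv gamma_equiv] _] := Hpent P HP.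
have [p1 [p2 [p1P p2P p1p2]]] := L_nontrivial_two_points (Hpent P HP).1 HL.
have /choice[phiD phiD_defines] :
    forall k, exists phi, 0 < k -> ppdefines (@covered _ Pset k) phi.
  by move=> k; case: (posnP k) => [->|/Hdef[phi def_phi]]; [exists [::] | exists phi].
exact: (pentagon_linear_reduction R Ha Hb Hg HP Hmax beta_equiv gamma_equiv
  p1P p2P p1p2 phiD_defines).
Qed.
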